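(* Let $f:\mathbb{R}^d\to\mathbb{R}$ be convex, $C^2$, with $\nabla^2 f(x)\succ0$ for all $x$, and suppose there is $L_{\text{alt}}>0$ with $$f(x+h)-f(x)\le\langle\nabla f(x),h\rangle+\tfrac12\|h\|_x^2+\tfrac{L_{\text{alt}}}{6}\|h\|_x^3\quad\forall x,h\in\mathbb{R}^d.$$ Let $x_0\in\mathbb{R}^d$, assume $f$ has a unique minimizer $x_*$ and that $\{x:f(x)\le f(x_0)\}$ is bounded. Let $L_{\text{est}}\ge L_{\text{alt}}$, $0<c_1\le1$, and let $(x_t)$ be the AICN iterates from $x_0$. Then there is an absolute constant $C>0$ such that for every $k\ge1$ with $\|\nabla f(x_t)\|_{x_t}^*\ge\frac{4c_1}{L_{\text{est}}}$ for all $t=0,\dots,k-1$, $$f(x_k)-f(x_* )\le\frac{C\,L_{\text{est}}D_k^3}{c_1k^2},\qquad D_k=\max_{0\le t\le k}\|x_t-x_*\|_{x_t}.$$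
   Context: Local norms: $\|h\|_x=\langle\nabla^2 f(x)h,h\rangle^{1/2}$, $\|g\|_x^*=\langle g,[\nabla^2 f(x)]^{-1}g\rangle^{1/2}$. AICN (Affine-Invariant Cubic Newton) with parameter $L_{\text{est}}>0$ from $x_0$: $x_{k+1}=x_k-\alpha_k[\nabla^2 f(x_k)]^{-1}\nabla f(x_k)$ with $\alpha_k=\frac{-1+\sqrt{1+2L_{\text{est}}\|\nabla f(x_k)\|_{x_k}^*}}{L_{\text{est}}\|\nabla f(x_k)\|_{x_k}^*}$ (and $\alpha_k:=1$ if $\nabla f(x_k)=0$, so then $x_{k+1}=x_k$). *)

From HB Require Import structures.
From mathcomp Require Import all_boot all_order all_algebra.
From mathcomp Require Import all_classical all_reals all_analysis.
Set Implicit Arguments. Unset Strict Implicit. Unset Printing Implicit Defensive.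
Import Order.TTheory GRing.Theory Num.Theory.
Import numFieldNormedType.Exports.
Local Open Scope ring_scope.

Definition ip (R : realType) (d : nat) (u v : 'cV[R]_d) : R := (u^T *m v) 0 0.

(* local norm ||h||_x = <Hess f(x) h, h>^(1/2), Hess f given as H *)
Definition lnorm (R : realType) (d : nat) (H : 'cV[R]_d -> 'M[R]_d)
  (x h : 'cV[R]_d) : R := Num.sqrt (ip (H x *m h) h).

Definition dnorm (R : realType) (d : nat) (H : 'cV[R]_d -> 'M[R]_d)
  (x g : 'cV[R]_d) : R := Num.sqrt (ip g (invmx (H x) *m g)).

Definition aicn_alpha (R : realType) (d : nat) (L : R)
  (G : 'cV[R]_d -> 'cV[R]_d) (H : 'cV[R]_d -> 'M[R]_d) (x : 'cV[R]_d) : R :=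
  if G x == 0 then 1
  else (-1 + Num.sqrt (1 + 2 * L * dnorm H x (G x))) / (L * dnorm H x (G x)).

Definition aicn_step (R : realType) (d : nat) (L : R)
  (G : 'cV[R]_d -> 'cV[R]_d) (H : 'cV[R]_d -> 'M[R]_d) (x : 'cV[R]_d) :
  'cV[R]_d := x - aicn_alpha L G H x *: (invmx (H x) *m G x).

Definition aicn_iter (R : realType) (d : nat) (L : R)
  (G : 'cV[R]_d -> 'cV[R]_d) (H : 'cV[R]_d -> 'M[R]_d) (x0 : 'cV[R]_d)
  (k : nat) : 'cV[R]_d := iter k (aicn_step L G H) x0.

Definition convex_fun (R : realType) (d : nat) (f : 'cV[R]_d -> R) : Prop :=
  forall (x y : 'cV[R]_d) (t : R), 0 <= t -> t <= 1 ->
    f (t *: x + (1 - t) *: y) <= t * f x + (1 - t) * f y.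

From HB Require Import structures.
From mathcomp Require Import all_boot all_order all_algebra.
From mathcomp Require Import all_classical all_reals all_analysis.
From mathcomp Require Import ring lra.
Import Order.TTheory GRing.Theory Num.Theory.
Import numFieldNormedType.Exports.
Local Open Scope ring_scope.

(* With [dn := ||grad f(x)||*_x] and [u := L alpha dn], the AICN step size is the root of
   [2 L dn = u (u + 2)], for which the cubic upper bound guarantees the decrease
   [f(x) - f(x+) >= dn^2 / (u + 2)]; when [dn >= 4 c1 / L] this gives
   [c1 dn^3 <= 9 L (f(x) - f(x+))^2].  Convexity and the Cauchy-Schwarz inequality in the
   local norm (which needs a symmetric Hessian, i.e. Schwarz's theorem for the C^2 function
   f) bound the gap [f(x_t) - f(x_* )] by [dn_t D_k].  Hence the gaps satisfy
   [delta_t^3 <= K (delta_t - delta_{t+1})^2] with [K = 9 L D_k^3 / c1], so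
   [1 / sqrt delta_t] grows by at least [1 / (2 sqrt K)] per step and
   [delta_k <= 4 K / k^2], which is the claim with [C = 36]. *)

Definition posdef {R : realType} {d : nat} (A : 'M[R]_d) : Prop :=
  forall h : 'cV[R]_d, h != 0 -> 0 < ip (A *m h) h.

Section InnerProduct.
Context {R : realType} {d : nat}.
Implicit Types (a b c g h u : 'cV[R]_d) (A : 'M[R]_d).

Lemma ipC a b : ip a b = ip b a.
Proof. by rewrite /ip -[in LHS](trmxK (a^T *m b)) trmx_mul trmxK mxE. Qed.

Lemma ipDr a b c : ip a (b + c) = ip a b + ip a c.
Proof. by rewrite /ip mulmxDr mxE. Qed.

Lemma ipZr a b (k : R) : ip a (k *: b) = k * ip a b.
Proof. by rewrite /ip -scalemxAr mxE. Qed.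

Lemma ipNr a b : ip a (- b) = - ip a b.
Proof. by rewrite -scaleN1r ipZr mulN1r. Qed.

Lemma ipBr a b c : ip a (b - c) = ip a b - ip a c.
Proof. by rewrite ipDr ipNr. Qed.

Lemma ipZl a b (k : R) : ip (k *: b) a = k * ip b a.
Proof. by rewrite ipC ipZr ipC. Qed.

Lemma ipNl a b : ip (- b) a = - ip b a.
Proof. by rewrite ipC ipNr ipC. Qed.

Lemma ipBl a b c : ip (b - c) a = ip b a - ip c a.
Proof. by rewrite ipC ipBr !(ipC a). Qed.

Lemma ip0l a : ip 0 a = 0.
Proof. by rewrite /ip trmx0 mul0mx mxE. Qed.

Lemma ip0r a : ip a 0 = 0.
Proof. by rewrite ipC ip0l. Qed.

Lemma ip_mulmxl A a b : ip (A *m a) b = ip a (A^T *m b).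
Proof. by rewrite /ip trmx_mul mulmxA. Qed.

Lemma ip_delta_mx a (i : 'I_d) : ip a (delta_mx i 0) = a i 0.
Proof. by rewrite /ip -colE !mxE. Qed.

Lemma posdef_ge0 {A} : posdef A -> forall h, 0 <= ip (A *m h) h.
Proof.
move=> pdA h; have [->|h0] := eqVneq h 0; first by rewrite mulmx0 ip0l.
exact/ltW/pdA.
Qed.

Lemma posdef_unitmx {A} : posdef A -> A \in unitmx.
Proof.
move=> pdA; rewrite unitmxE unitfE -det_tr; apply/negP => /det0P [v v0 vA].
have w0 : v^T != 0 by apply: contra v0 => /eqP h; rewrite -(trmxK v) h trmx0.
have := pdA _ w0.
have -> : A *m v^T = 0 by rewrite -(trmxK (A *m v^T)) trmx_mul trmxK vA trmx0.
by rewrite ip0l ltxx.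
Qed.

Lemma ip_invmx_ge0 {A} g : posdef A -> 0 <= ip g (invmx A *m g).
Proof.
move=> pdA; rewrite -{1}(mulKVmx (posdef_unitmx pdA) g).
exact: posdef_ge0.
Qed.

Lemma posdef_cauchy_schwarz A a b : A^T = A -> posdef A ->
  ip (A *m a) b ^+ 2 <= ip (A *m a) a * ip (A *m b) b.
Proof.
move=> sA pdA.
have symB p q : ip (A *m p) q = ip (A *m q) p by rewrite ip_mulmxl sA ipC.
have [->|b0] := eqVneq b 0; first by rewrite ip0r mulmx0 ip0l mulr0 expr0n.
have bpos := pdA _ b0.
set l := ip (A *m a) b / ip (A *m b) b.
have := posdef_ge0 pdA (a - l *: b).
rewrite mulmxBr ipBl !ipBr -!scalemxAr !ipZl !ipZr (symB b a).
set P := ip (A *m a) a; set Q := ip (A *m a) b; set S := ip (A *m b) b.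
rewrite /l -/Q -/S.
have -> : P - Q / S * Q - (Q / S * Q - Q / S * (Q / S * S)) = P - Q ^+ 2 / S.
  by field; rewrite gt_eqF.
by rewrite subr_ge0 ler_pdivrMr // mulrC.
Qed.

Section LocalNorms.
Context {H : 'cV[R]_d -> 'M[R]_d} {x : 'cV[R]_d}.
Hypotheses (symH : (H x)^T = H x) (pdH : posdef (H x)).

Lemma dnorm_sqr g : dnorm H x g ^+ 2 = ip g (invmx (H x) *m g).
Proof. by rewrite /dnorm sqr_sqrtr // ip_invmx_ge0. Qed.

(* Cauchy-Schwarz for the form of [H x], applied to [(H x)^-1 g] and [u]. *)
Lemma ip_le_dnorm_lnorm g u : ip g u <= dnorm H x g * lnorm H x u.
Proof.
set w := invmx (H x) *m g.
have gw : g = H x *m w by rewrite /w mulKVmx // posdef_unitmx.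
rewrite /dnorm /lnorm -sqrtrM; last exact: ip_invmx_ge0.
apply: (le_trans (ler_norm _)); rewrite -sqrtr_sqr ler_sqrt; last first.
  by rewrite mulr_ge0 ?posdef_ge0 ?ip_invmx_ge0.
by rewrite -/w {1 2}gw; exact: posdef_cauchy_schwarz.
Qed.

Lemma ip_newton_step g (s : R) :
  ip g (- (s *: (invmx (H x) *m g))) = - (s * dnorm H x g ^+ 2).
Proof. by rewrite ipNr ipZr dnorm_sqr. Qed.

Lemma lnorm_newton_step g (s : R) : 0 <= s ->
  lnorm H x (- (s *: (invmx (H x) *m g))) = s * dnorm H x g.
Proof.
move=> s0; rewrite /lnorm mulmxN -scalemxAr mulKVmx ?posdef_unitmx //.
rewrite ipNl ipNr opprK ipZl ipZr -dnorm_sqr mulrA -expr2 -exprMn sqrtr_sqr.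
by rewrite ger0_norm // mulr_ge0 // sqrtr_ge0.
Qed.

End LocalNorms.
End InnerProduct.

Section LineDerivative.
Local Open Scope classical_set_scope.
Context {R : realType}.

Lemma is_derive_line {V W : normedModType R} {F : V -> W} {DF : V -> V -> W} :
  (forall y, is_diff y F (DF y)) -> forall (x v : V) (t : R),
  is_derive t 1 (fun s : R => F (x + s *: v)) (DF (x + t *: v) v).
Proof.
move=> dF x v t.
have dline : is_diff t (fun s : R => x + s *: v) (fun s => s *: v).
  have := is_diffD (is_diff_cst x t) (is_diff_scalel t v).
  have -> : 0 + *:%R ^~ v = (fun s : R => s *: v) by apply/funext => s /=; rewrite add0r.
  exact.
have dcomp := is_diff_comp dline (dF (x + t *: v)).
apply: DeriveDef; first by apply: diff_derivable; exact: (ex_diff (is_diff_def := dcomp)).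
rewrite deriveE; last exact: (ex_diff (is_diff_def := dcomp)).
by rewrite (diff_val (is_diff_def := dcomp)) /= scale1r.
Qed.

(* The right difference quotients of [s |-> f (x + s (y - x))] at [0] are
   bounded by [f y - f x], and they converge to the directional derivative. *)
Lemma convex_fun_grad_le (d : nat) (f : 'cV[R]_d -> R) (G : 'cV[R]_d -> 'cV[R]_d) :
  (forall x, is_diff x f (fun h => ip (G x) h)) -> convex_fun f ->
  forall x y, ip (G x) (y - x) <= f y - f x.
Proof.
move=> df cf x y; set v := y - x.
have dv := is_derive_line df x v 0; rewrite scale0r addr0 in dv.
rewrite -(derive_val (is_derive := dv)) /derive.
set q := (fun h : R => h^-1 *: _).
have q_cvg : q @ 0^' --> lim (q @ 0^') := ex_derive (is_derive := dv).
have q_cvg_right : q @ 0^'+ --> lim (q @ 0^').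
  move=> A /q_cvg /nbhs_ballP [_ /posnumP[e] xe_A].
  by exists e%:num => //= z xe_z /gt_eqF/negbT/xe_A; exact.
rewrite -(cvg_lim _ q_cvg_right) //.
apply: limr_le; first exact: (cvgP _ q_cvg_right).
near=> t.
have t0 : 0 < t by near: t; exact: nbhs_right_gt.
have t1 : t <= 1 by near: t; exact: nbhs_right_le.
rewrite /q /= addr0 scale0r addr0 /GRing.scale /= mulr1.
have -> : x + t *: v = t *: y + (1 - t) *: x.
  by rewrite /v scalerBr scalerBl scale1r addrCA addrA.
rewrite mulrC ler_pdivrMr //.
have := cf y x t (ltW t0) t1.
by set a := f y; set b := f x; set c := f _; lra.
Unshelve. all: by end_near.
Qed.

End LineDerivative.

Definition coordf {R : realType} {d : nat} (i : 'I_d) (g : 'cV[R]_d) : R^o := g i 0.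

Lemma coordf_linear {R : realType} {d : nat} (i : 'I_d) : linear (@coordf R d i).
Proof. by move=> a u v; rewrite /coordf !mxE. Qed.

HB.instance Definition _ (R : realType) (d : nat) (i : 'I_d) :=
  GRing.isLinear.Build R 'cV[R]_d R^o _ (@coordf R d i) (@coordf_linear R d i).

Lemma is_diff_coordf {R : realType} {d : nat} (i : 'I_d) (y : 'cV[R]_d) :
  is_diff y (@coordf R d i) (@coordf R d i).
Proof.
have : continuous (@coordf R d i) by exact: coord_continuous.
by move=> cont; apply: DiffDef; [exact: linear_differentiable | exact: diff_lin].
Qed.

Lemma ball_add_scale2 {R : realType} {V : normedModType R} (x u v : V) (r : R) :
  0 < r -> exists2 s : R, 0 < s &
  forall a b : R, 0 < a -> a < s -> 0 < b -> b < s -> ball x r (x + a *: u + b *: v).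
Proof.
move=> r0; set c := `|u| + `|v| + 1.
have c0 : 0 < c by rewrite /c ltr_wpDl // addr_ge0.
exists (r / c); first by rewrite divr_gt0.
move=> a b a0 ar b0 br.
rewrite -ball_normE /ball_ /= -addrA opprD addrA subrr sub0r normrN.
apply: le_lt_trans (ler_normD _ _) _; rewrite !normrZ !gtr0_norm //.
rewrite -[ltRHS](divfK (lt0r_neq0 c0)) /c !mulrDr mulr1.
have : a * `|u| <= r / c * `|u| by rewrite ler_wpM2r // ltW.
have : b * `|v| <= r / c * `|v| by rewrite ler_wpM2r // ltW.
have : 0 < r / c by rewrite divr_gt0.
lra.
Qed.

Section HessianSymmetry.
Local Open Scope classical_set_scope.
Context {R : realType} {d : nat} {f : 'cV[R]_d -> R} {G : 'cV[R]_d -> 'cV[R]_d}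
  {H : 'cV[R]_d -> 'M[R]_d}.
Hypothesis df : forall x, is_diff x f (fun h => ip (G x) h).
Hypothesis dG : forall x, is_diff x G (fun h => H x *m h).

Local Notation e i := (delta_mx i 0 : 'cV[R]_d).

(* Two applications of the mean value theorem to the second difference of [f]
   on the square with corners [x] and [x + s e_i + s e_j]. *)
Lemma second_difference_mvt x i j s : 0 < s -> exists a b, [/\ 0 < a, a < s, 0 < b, b < s &
  f (x + s *: e j + s *: e i) - f (x + s *: e i) - (f (x + s *: e j) - f x)
   = s * (s * H (x + a *: e i + b *: e j) i j)].
Proof.
move=> s0.
pose psi a := f (x + s *: e j + a *: e i) - f (x + a *: e i).
pose dpsi a := ip (G (x + s *: e j + a *: e i)) (e i) - ip (G (x + a *: e i)) (e i).
have psi_derive (a : R) : is_derive a 1 psi (dpsi a).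
  have d1 := is_derive_line df (x + s *: e j) (e i) a.
  have d2 := is_derive_line df x (e i) a.
  exact: is_deriveB d1 d2.
have psi_cont : {within `[0, s], continuous psi}.
  by apply: derivable_within_continuous => z _; exact: ex_derive.
have [a a_in psi_mvt] := MVT s0 (fun a _ => psi_derive a) psi_cont.
pose chi b := coordf i (G (x + a *: e i + b *: e j)).
pose dchi b := coordf i (H (x + a *: e i + b *: e j) *m e j).
have chi_derive (b : R) : is_derive b 1 chi (dchi b).
  have dGi y : is_diff y (coordf i \o G) (coordf i \o (fun h => H y *m h)).
    exact: is_diff_comp (dG y) (is_diff_coordf i (G y)).
  exact: (is_derive_line dGi (x + a *: e i) (e j) b).
have chi_cont : {within `[0, s], continuous chi}.
  by apply: derivable_within_continuous => z _; exact: ex_derive.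
have [b b_in chi_mvt] := MVT s0 (fun b _ => chi_derive b) chi_cont.
exists a, b; move: a_in b_in; rewrite !in_itv /= => /andP[a0 a1] /andP[b0 b1].
split => //.
move: psi_mvt chi_mvt; rewrite /psi /dpsi /chi /dchi /coordf.
rewrite !scale0r !addr0 !subr0 !ip_delta_mx -colE mxE => -> chi_mvt.
by rewrite (addrAC x (s *: _)) chi_mvt mulrC (mulrC _ s).
Qed.

Hypothesis cH : continuous H.

(* Both mixed second differences equal [s^2] times an entry of [H] near [x];
   by continuity these entries tend to [H x i j] and [H x j i]. *)
Lemma hessian_sym x : (H x)^T = H x.
Proof.
apply/matrixP => i j; rewrite mxE; apply/eqP/negPn/negP => neq.
set eps := `|H x j i - H x i j| / 2.
have eps0 : 0 < eps by rewrite divr_gt0 // normr_gt0 subr_eq0.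
have cont k l : {for x, continuous (fun y => H y k l)}.
  exact: (continuous_comp (cH x) (@coord_continuous R d d k l (H x))).
have near_x : \forall y \near x, `|H x i j - H y i j| < eps /\ `|H x j i - H y j i| < eps.
  by apply: filterI; [move/cvgrPdist_lt : (cont i j) | move/cvgrPdist_lt : (cont j i)];
    apply.
have [r r0 /= near_r] := (nbhs_ballP _ _).1 near_x.
have [s s0 in_ball] := ball_add_scale2 x (e i) (e j) _ r0.
have [a [b [a0 a1 b0 b1 Hij]]] := second_difference_mvt x i j s s0.
have [a' [b' [a0' a1' b0' b1' Hji]]] := second_difference_mvt x j i s s0.
have Hij_ji : H (x + a *: e i + b *: e j) i j = H (x + b' *: e i + a' *: e j) j i.
  have sn : s != 0 by rewrite gt_eqF.
  apply: (mulfI sn); apply: (mulfI sn).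
  rewrite -Hij (addrAC x (b' *: _)) -Hji (addrAC x (s *: e i)); lra.
have [close_ij _] := near_r _ (in_ball a b a0 a1 b0 b1).
have [_ close_ji] := near_r _ (in_ball b' a' b0' b1' a0' a1').
move: close_ij close_ji; rewrite -Hij_ji.
set A := H x j i; set B := H x i j; set E := H _ i j => close_ij close_ji.
have : `|A - B| <= `|A - E| + `|B - E|.
  by rewrite (distrC B E); have := ler_normD (A - E) (E - B); rewrite addrA subrK.
have : eps * 2 = `|A - B| by rewrite /eps divfK.
lra.
Qed.

End HessianSymmetry.

Section CubicRecurrence.
Context {R : rcfType}.

Lemma invsqrt_increment (K a b : R) : 0 < K -> 0 < b -> b <= a ->
  a ^+ 3 <= K * (a - b) ^+ 2 ->
  (Num.sqrt a)^-1 + (2 * Num.sqrt K)^-1 <= (Num.sqrt b)^-1.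
Proof.
move=> K0 b0 ba rec.
have a0 : 0 < a := lt_le_trans b0 ba.
set p := Num.sqrt a; set q := Num.sqrt b; set w := Num.sqrt K.
have q0 : 0 < q by rewrite sqrtr_gt0.
have qp : q <= p by rewrite ler_sqrt // ltW.
have p0 : 0 < p := lt_le_trans q0 qp.
have w0 : 0 < w by rewrite sqrtr_gt0.
have [pa qb wK] : [/\ p ^+ 2 = a, q ^+ 2 = b & w ^+ 2 = K].
  by split; rewrite sqr_sqrtr // ltW.
have p3 : p ^+ 3 <= w * (p ^+ 2 - q ^+ 2).
  have n1 : 0 <= p ^+ 3 by rewrite exprn_ge0 // ltW.
  have q2p2 : q ^+ 2 <= p ^+ 2 by rewrite ler_pXn2r // nnegrE ltW.
  have n2 : 0 <= w * (p ^+ 2 - q ^+ 2).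
    by rewrite mulr_ge0 ?subr_ge0 // ltW.
  rewrite -(ler_pXn2r (n := 2)) ?nnegrE //.
  have -> : (p ^+ 3) ^+ 2 = (p ^+ 2) ^+ 3 by ring.
  have -> : (w * (p ^+ 2 - q ^+ 2)) ^+ 2 = w ^+ 2 * (p ^+ 2 - q ^+ 2) ^+ 2 by ring.
  by rewrite pa qb wK.
(* [p^2 - q^2 <= 2 p (p - q)] and division by [p] give [p q <= p^2 <= 2 w (p - q)]. *)
have pq : p * q <= 2 * w * (p - q).
  have : p * (p * p) <= p * (2 * w * (p - q)).
    have : 0 <= w * (p - q) by rewrite mulr_ge0 ?subr_ge0 // ltW.
    have e : p ^+ 2 - q ^+ 2 = (p - q) * (p + q) by ring.
    rewrite e in p3.
    nra.
  rewrite ler_pM2l // => pp; nra.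
have -> : q^-1 = p^-1 + (p - q) / (p * q) by field; rewrite !gt_eqF.
rewrite lerD2l ler_pdivlMr ?mulr_gt0 // mulrC ler_pdivrMr ?mulr_gt0 //.
by rewrite mulrC [q * p]mulrC [(p - q) * _]mulrC.
Qed.

(* Along the recurrence [1 / sqrt (dl t)] grows by [1 / (2 sqrt K)] per step. *)
Lemma cubic_recurrence_rate {dl : nat -> R} {K : R} {k : nat} :
  0 <= K -> (forall t, (t <= k)%N -> 0 <= dl t) ->
  (forall t, (t < k)%N -> dl t.+1 <= dl t /\ dl t ^+ 3 <= K * (dl t - dl t.+1) ^+ 2) ->
  dl k * k%:R ^+ 2 <= 4 * K.
Proof.
move=> K0 dl0 rec.
have [->|k0] := posnP k; first by rewrite expr0n mulr0 mulr_ge0.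
have [->|dk0] := eqVneq (dl k) 0; first by rewrite mul0r mulr_ge0.
have dkp : 0 < dl k by rewrite lt_def dk0 dl0.
have dl_mono t m : (t + m <= k)%N -> dl (t + m)%N <= dl t.
  elim: m => [|m IH] tmk; first by rewrite addn0.
  rewrite addnS; apply: le_trans (IH _); last by rewrite (leq_trans _ tmk) // leq_add2l.
  by apply: (rec _ _).1; rewrite -addnS.
have dl_gt0 t : (t <= k)%N -> 0 < dl t.
  by move=> tk; apply: lt_le_trans dkp _; have := dl_mono t (k - t)%N; rewrite subnKC //; apply.
have Kp : 0 < K.
  rewrite lt_def K0 andbT; apply: contraTneq (rec 0%N k0).2 => ->.
  by rewrite mul0r -ltNge exprn_gt0 // dl_gt0.
set w := Num.sqrt K.
have w0 : 0 < w by rewrite sqrtr_gt0.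
have lin t : (t <= k)%N -> t%:R / (2 * w) <= (Num.sqrt (dl t))^-1.
  elim: t => [_|t IH tk]; first by rewrite mul0r invr_ge0 sqrtr_ge0.
  have [dec cub] := rec t tk.
  apply: le_trans (@invsqrt_increment K _ _ Kp (dl_gt0 _ tk) dec cub).
  by rewrite -natr1 mulrDl mul1r lerD2r IH // ltnW.
have := lin k (leqnn k).
rewrite ler_pdivrMr ?mulr_gt0 // mulrC ler_pdivlMr ?sqrtr_gt0 // mulrC => sk.
have sq : (Num.sqrt (dl k) * k%:R) ^+ 2 <= (2 * w) ^+ 2.
  by rewrite ler_pXn2r ?nnegrE ?mulr_ge0 ?sqrtr_ge0 // ltW.
rewrite !exprMn (sqr_sqrtr (ltW dkp)) sqr_sqrtr // in sq.
by apply: le_trans sq _; rewrite -natrX.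
Qed.

End CubicRecurrence.

Section SqrtOnePlus.
Context {R : rcfType}.
Implicit Types (c L dn : R).

Lemma sqrt1D_ge1 {c} : 0 <= c -> 1 <= Num.sqrt (1 + c).
Proof. by move=> c0; rewrite -[leLHS]sqrtr1 ler_sqrt ?lerDl // addr_ge0. Qed.

Lemma sqrt1D_sqr_sub1 {c} : 0 <= c -> c = (Num.sqrt (1 + c) - 1) * (Num.sqrt (1 + c) + 1).
Proof.
move=> c0; rewrite -subr_sqr expr1n sqr_sqrtr ?addr_ge0 //.
by rewrite addrC addKr.
Qed.

Lemma sqrt1D_add1_sqr_le L (c1 : R) dn : 0 < L -> 0 < c1 -> c1 <= 1 ->
  4%:R * c1 / L <= dn -> c1 * (Num.sqrt (1 + 2 * L * dn) + 1) ^+ 2 <= 9%:R * L * dn.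
Proof.
move=> L0 c0 c1le dn_ge.
have dn0 : 0 <= dn := le_trans (ltW (divr_gt0 (mulr_gt0 (ltr0Sn _ _) c0) L0)) dn_ge.
have c0' : 0 <= 2 * L * dn by rewrite !mulr_ge0 // ltW.
have s1 := sqrt1D_ge1 c0'; have Ldn := sqrt1D_sqr_sub1 c0'.
set s := Num.sqrt _ in s1 Ldn *.
have : 4%:R * c1 <= L * dn by rewrite [L * dn]mulrC -ler_pdivrMr.
have : 0 <= c1 * (s - 1) ^+ 2 by rewrite mulr_ge0 ?sqr_ge0 // ltW.
have : 0 <= (1 - c1) * ((s - 1) * (s + 1)).
  by rewrite !mulr_ge0 ?subr_ge0 // addr_ge0 // (le_trans ler01 s1).
nra.
Qed.

End SqrtOnePlus.

Section AICNStep.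
Context {R : realType} {d : nat} {f : 'cV[R]_d -> R} {G : 'cV[R]_d -> 'cV[R]_d}
  {H : 'cV[R]_d -> 'M[R]_d} {Lalt L : R}.
Hypothesis df : forall x, is_diff x f (fun h => ip (G x) h).
Hypothesis cf : convex_fun f.
Hypothesis symH : forall x, (H x)^T = H x.
Hypothesis pdH : forall x, posdef (H x).
Hypothesis L_gt0 : 0 < L.
Hypothesis Lalt_le : Lalt <= L.
Hypothesis cubic_ub : forall x h, f (x + h) - f x <=
  ip (G x) h + 2^-1 * lnorm H x h ^+ 2 + Lalt / 6%:R * lnorm H x h ^+ 3.

Local Notation dn x := (dnorm H x (G x)).
Local Notation step := (aicn_step L G H).

Lemma gap_le_dnorm_lnorm x y : f x - f y <= dn x * lnorm H x (x - y).
Proof.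
apply: le_trans (ip_le_dnorm_lnorm (symH x) (pdH x) _ _).
by rewrite -[x - y]opprB ipNr -[f x - f y]opprB lerN2 convex_fun_grad_le.
Qed.

(* With [u := L alpha ||g||*] the step size satisfies [2 L ||g||* = u (u + 2)],
   and the cubic upper bound then loses at most [u^3 (u + 2) / (12 L^2)]. *)
Lemma aicn_step_decrease x : 0 < dn x ->
  dn x ^+ 2 <= (f x - f (step x)) * (Num.sqrt (1 + 2 * L * dn x) + 1).
Proof.
set g := G x; set s := Num.sqrt _ => dn_gt0.
have g0 : g != 0.
  by apply: contraTneq dn_gt0 => ->; rewrite /dnorm mulmx0 ip0l sqrtr0 ltxx.
have c0 : 0 <= 2 * L * dn x by rewrite !mulr_ge0 // ltW.
have s1 := sqrt1D_ge1 c0; have Ldn := sqrt1D_sqr_sub1 c0; rewrite -/s in s1 Ldn.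
set u := s - 1 in Ldn *; have u0 : 0 <= u by rewrite subr_ge0.
have su : s + 1 = u + 2 by rewrite /u; ring.
have dnE : dn x = u * (u + 2) / (2 * L).
  by rewrite -su -Ldn; field; rewrite gt_eqF.
set alpha := u / (L * dn x).
have alpha0 : 0 <= alpha by rewrite divr_ge0 ?mulr_ge0 // ltW.
have -> : step x = x + - (alpha *: (invmx (H x) *m g)).
  by rewrite /aicn_step /aicn_alpha -/g (negbTE g0) -/s [-1 + s]addrC.
have := cubic_ub x (- (alpha *: (invmx (H x) *m g))).
rewrite ip_newton_step // lnorm_newton_step //.
have -> : alpha * dn x = u / L by rewrite /alpha; field; rewrite !gt_eqF.
have -> : alpha * dn x ^+ 2 = u / L * dn x by rewrite /alpha; field; rewrite !gt_eqF.
set dec := f x - f _ => ub.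
have cubic_le : Lalt / 6%:R * (u / L) ^+ 3 <= L / 6%:R * (u / L) ^+ 3.
  apply: ler_wpM2r; first by rewrite exprn_ge0 // divr_ge0 // ltW.
  by rewrite ler_pM2r // invr_gt0.
set m := u / L * dn x - 2^-1 * (u / L) ^+ 2 - L / 6%:R * (u / L) ^+ 3.
have m_le : m <= dec by rewrite /m /dec; lra.
have gap : m * (u + 2) - dn x ^+ 2 = u ^+ 3 * (u + 2) / (12%:R * L ^+ 2).
  by rewrite /m dnE; field; rewrite gt_eqF.
have gap0 : 0 <= u ^+ 3 * (u + 2) / (12%:R * L ^+ 2).
  apply: divr_ge0; first by rewrite mulr_ge0 ?exprn_ge0 //; lra.
  by rewrite mulr_ge0 ?sqr_ge0.
rewrite su; apply: le_trans (_ : m * (u + 2) <= _); first lra.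
by apply: ler_wpM2r => //; lra.
Qed.

Lemma aicn_step_le x : 0 < dn x -> f (step x) <= f x.
Proof.
move=> dn_gt0; have dec := aicn_step_decrease x dn_gt0.
have v0 : 0 < Num.sqrt (1 + 2 * L * dn x) + 1 by rewrite ltr_wpDl ?sqrtr_ge0.
by rewrite -subr_ge0 -(pmulr_lge0 _ v0) (le_trans (sqr_ge0 _) dec).
Qed.

Lemma aicn_step_cubic_decrease x c1 : 0 < c1 -> c1 <= 1 -> 4%:R * c1 / L <= dn x ->
  c1 * dn x ^+ 3 <= 9%:R * L * (f x - f (step x)) ^+ 2.
Proof.
move=> c1_gt0 c1_le dn_ge.
have dn_gt0 : 0 < dn x by apply: lt_le_trans dn_ge; rewrite !mulr_gt0 ?invr_gt0.
set v := Num.sqrt (1 + 2 * L * dn x) + 1.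
have v0 : 0 < v by rewrite ltr_wpDl ?sqrtr_ge0.
have dec := aicn_step_decrease x dn_gt0; rewrite -/v in dec.
have cv := sqrt1D_add1_sqr_le L c1 (dn x) L_gt0 c1_gt0 c1_le dn_ge; rewrite -/v in cv.
rewrite -(ler_pM2r (exprn_gt0 2 v0)).
apply: le_trans (_ : 9%:R * L * (dn x ^+ 2) ^+ 2 <= _).
  have -> : c1 * dn x ^+ 3 * v ^+ 2 = dn x ^+ 3 * (c1 * v ^+ 2) by ring.
  have -> : 9%:R * L * (dn x ^+ 2) ^+ 2 = dn x ^+ 3 * (9%:R * L * dn x) by ring.
  by rewrite ler_wpM2l // exprn_ge0 // ltW.
have -> : 9%:R * L * (f x - f (step x)) ^+ 2 * v ^+ 2 =
          9%:R * L * ((f x - f (step x)) * v) ^+ 2 by ring.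
rewrite ler_wpM2l ?mulr_ge0 ?(ltW L_gt0) // ler_pXn2r ?nnegrE ?sqr_ge0 //.
exact: le_trans (sqr_ge0 _) dec.
Qed.

Lemma aicn_gap_recurrence x y c1 D : 0 < c1 -> c1 <= 1 -> 4%:R * c1 / L <= dn x ->
  f y <= f x -> lnorm H x (x - y) <= D ->
  (f x - f y) ^+ 3 <= 9%:R * L * D ^+ 3 / c1 * (f x - f (step x)) ^+ 2.
Proof.
move=> c1_gt0 c1_le dn_ge fyx lnD.
have dn_ge0 : 0 <= dn x by rewrite sqrtr_ge0.
apply: le_trans (_ : (dn x * D) ^+ 3 <= _).
  rewrite ler_pXn2r ?nnegrE ?subr_ge0 ?mulr_ge0 ?(le_trans (sqrtr_ge0 _) lnD) //.
  by apply: le_trans (gap_le_dnorm_lnorm x y) _; rewrite ler_wpM2l.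
have D0 : 0 <= D := le_trans (sqrtr_ge0 _) lnD.
have -> : 9%:R * L * D ^+ 3 / c1 * (f x - f (step x)) ^+ 2 =
          D ^+ 3 * (9%:R * L * (f x - f (step x)) ^+ 2 / c1) by ring.
rewrite exprMn mulrC ler_wpM2l ?exprn_ge0 // ler_pdivlMr // mulrC.
exact: aicn_step_cubic_decrease.
Qed.

End AICNStep.

Theorem theorem12 (R : realType) :
  exists C : R, 0 < C /\
  forall (d : nat) (f : 'cV[R]_d -> R) (G : 'cV[R]_d -> 'cV[R]_d)
         (H : 'cV[R]_d -> 'M[R]_d) (Lalt Lest c1 : R) (x0 xstar : 'cV[R]_d),
    (forall x, is_diff x f (fun h => ip (G x) h)) ->
    (forall x, is_diff x G (fun h => H x *m h)) ->
    continuous H ->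
    convex_fun f ->
    (forall x h, h != 0 -> 0 < ip (H x *m h) h) ->
    0 < Lalt ->
    (forall x h, f (x + h) - f x <=
       ip (G x) h + 2^-1 * lnorm H x h ^+ 2 + Lalt / 6%:R * lnorm H x h ^+ 3) ->
    (forall y, f xstar <= f y) ->
    (forall y, (forall z, f y <= f z) -> y = xstar) ->
    (exists M : R, forall x, f x <= f x0 -> `|x| <= M) ->
    Lalt <= Lest -> 0 < c1 -> c1 <= 1 ->
    forall k : nat, (1 <= k)%N ->
    (forall t : nat, (t < k)%N ->
       4%:R * c1 / Lest <= dnorm H (aicn_iter Lest G H x0 t) (G (aicn_iter Lest G H x0 t))) ->
    f (aicn_iter Lest G H x0 k) - f xstar <=
      C * Lest * (\big[Num.max/0]_(t < k.+1)
                    lnorm H (aicn_iter Lest G H x0 t) (aicn_iter Lest G H x0 t - xstar)) ^+ 3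
      / (c1 * (k%:R) ^+ 2).
Proof.
exists 36%:R; split => // d f G H Lalt L c1 x0 xstar df dG cH cf pdH Lalt_gt0 cubic_ub
  fmin _ _ Lalt_le c1_gt0 c1_le k k_gt0 dn_ge.
have L_gt0 : 0 < L := lt_le_trans Lalt_gt0 Lalt_le.
have symH := hessian_sym df dG cH.
set x := aicn_iter L G H x0 in dn_ge *.
set D := \big[Num.max/0]_(t < k.+1) _.
have D_ge t : (t <= k)%N -> lnorm H (x t) (x t - xstar) <= D.
  by move=> tk; exact: (le_bigmax 0 _ (Ordinal (tk : (t < k.+1)%N))).
have D0 : 0 <= D := le_trans (sqrtr_ge0 _) (D_ge 0%N (leq0n _)).
set K := 9%:R * L * D ^+ 3 / c1.
have K0 : 0 <= K by rewrite divr_ge0 ?mulr_ge0 ?exprn_ge0 ?(ltW L_gt0) ?(ltW c1_gt0).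
have xS t : x t.+1 = aicn_step L G H (x t) by rewrite /x /aicn_iter iterS.
have dn_gt0 t : (t < k)%N -> 0 < dnorm H (x t) (G (x t)).
  by move/dn_ge; apply: lt_le_trans; rewrite divr_gt0 ?mulr_gt0.
have gap0 t : (t <= k)%N -> 0 <= f (x t) - f xstar by rewrite subr_ge0.
have gap_rec t : (t < k)%N -> f (x t.+1) - f xstar <= f (x t) - f xstar /\
    (f (x t) - f xstar) ^+ 3 <= K * ((f (x t) - f xstar) - (f (x t.+1) - f xstar)) ^+ 2.
  move=> tk; rewrite xS; split.
    by rewrite lerD2r (aicn_step_le pdH L_gt0 Lalt_le cubic_ub _ (dn_gt0 t tk)).
  rewrite opprB addrA subrK.
  exact: aicn_gap_recurrence df cf symH pdH L_gt0 Lalt_le cubic_ub _ _ _ _ c1_gt0 c1_le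
    (dn_ge t tk) (fmin _) (D_ge t (ltnW tk)).
have rate := cubic_recurrence_rate K0 gap0 gap_rec.
rewrite ler_pdivlMr ?mulr_gt0 ?exprn_gt0 ?ltr0n //.
have -> : 36%:R * L * D ^+ 3 = c1 * (4 * K) by rewrite /K; field; rewrite gt_eqF.
by rewrite mulrCA ler_pM2l.
Qed.
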